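(* Let $N\ge1$ and for $1\le i\le N$ let $S_i:\mathcal H\to\mathcal H$ be a $\kappa_i$-strict pseudocontraction with $0\le\kappa_i<1$; set $\kappa=\max_i\kappa_i$ and assume $F=\bigcap_{i=1}^N\mathrm{Fix}(S_i)\neq\emptyset$. For each $n$ let $\lambda_{n,1},\dots,\lambda_{n,N}>0$ with $\sum_i\lambda_{n,i}=1$ and $\inf_n\lambda_{n,i}>0$ for each $i$, and set $Q_n=\sum_{i=1}^N\lambda_{n,i}S_i$. Let $\alpha_n\in(\kappa,1)$ and $T_nx=\frac{x+R_nx}{2}+\frac12\big(\frac{\kappa-\alpha_n}{1-\alpha_n}\big)(x-R_nx)$ with $R_nx=\alpha_nx+(1-\alpha_n)Q_nx$. Then $(T_n)_{n\ge0}$ is coherent: for every bounded sequence $(z_n)$ with $\sum_n\|z_{n+1}-z_n\|^2<\infty$ and $\sum_n\|z_n-T_nz_n\|^2<\infty$, every weak cluster point of $(z_n)$ lies in $\bigcap_n\mathrm{Fix}(T_n)=F$.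
   Context: A map $Q:\mathcal H\to\mathcal H$ is a $\kappa$-strict pseudocontraction ($0\le\kappa<1$) if $\|Qx-Qy\|^2\le\|x-y\|^2+\kappa\|(I-Q)x-(I-Q)y\|^2$ for all $x,y$. $\mathrm{Fix}(T)=\{x:Tx=x\}$. $\mathcal H$ is a real Hilbert space. *)

From Stdlib Require Import Reals Lra Lia List.
Open Scope R_scope.

Record Hilbert := {
  hcar :> Type;
  hzero : hcar;
  hadd : hcar -> hcar -> hcar;
  hopp : hcar -> hcar;
  hscal : R -> hcar -> hcar;
  hinner : hcar -> hcar -> R;
  hadd_assoc : forall x y z, hadd x (hadd y z) = hadd (hadd x y) z;
  hadd_comm : forall x y, hadd x y = hadd y x;
  hadd_0l : forall x, hadd hzero x = x;
  hadd_oppl : forall x, hadd (hopp x) x = hzero;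
  hscal_assoc : forall a b x, hscal a (hscal b x) = hscal (a * b) x;
  hscal_1 : forall x, hscal 1 x = x;
  hscal_addr : forall a x y, hscal a (hadd x y) = hadd (hscal a x) (hscal a y);
  hscal_addl : forall a b x, hscal (a + b) x = hadd (hscal a x) (hscal b x);
  hinner_sym : forall x y, hinner x y = hinner y x;
  hinner_addl : forall x y z, hinner (hadd x y) z = hinner x z + hinner y z;
  hinner_scall : forall a x y, hinner (hscal a x) y = a * hinner x y;
  hinner_pos : forall x, 0 <= hinner x x;
  hinner_def : forall x, hinner x x = 0 -> x = hzero;
  hcomplete : forall u : nat -> hcar,
    (forall eps, eps > 0 -> exists N, forall m n, (m >= N)%nat -> (n >= N)%nat ->
        sqrt (hinner (hadd (u m) (hopp (u n))) (hadd (u m) (hopp (u n)))) < eps) ->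
    exists l, forall eps, eps > 0 -> exists N, forall n, (n >= N)%nat ->
        sqrt (hinner (hadd (u n) (hopp l)) (hadd (u n) (hopp l))) < eps
}.

Arguments hzero {h}.
Arguments hadd {h}.
Arguments hopp {h}.
Arguments hscal {h}.
Arguments hinner {h}.

Section Ops.
Context {H : Hilbert}.
Definition hsub (x y : H) : H := hadd x (hopp y).
Definition hnorm (x : H) : R := sqrt (hinner x x).

Definition strict_pseudo (k : R) (Q : H -> H) : Prop :=
  forall x y : H,
    (hnorm (hsub (Q x) (Q y)))^2 <=
    (hnorm (hsub x y))^2 + k * (hnorm (hsub (hsub x (Q x)) (hsub y (Q y))))^2.

Fixpoint vsum (f : nat -> H) (N : nat) : H :=
  match N with O => hzero | S m => hadd (vsum f m) (f m) end.

Definition weak_cluster (z : nat -> H) (x : H) : Prop :=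
  exists phi : nat -> nat, (forall k, (phi k < phi (S k))%nat) /\
    forall y : H, Un_cv (fun k => hinner (z (phi k)) y) (hinner x y).

Definition bounded_seq (z : nat -> H) : Prop :=
  exists M, forall n, hnorm (z n) <= M.

Definition Qop (N : nat) (lam : nat -> nat -> R) (S : nat -> H -> H)
  (n : nat) (x : H) : H := vsum (fun i => hscal (lam n i) (S i x)) N.

Definition Rop (N : nat) (lam : nat -> nat -> R) (S : nat -> H -> H)
  (alpha : nat -> R) (n : nat) (x : H) : H :=
  hadd (hscal (alpha n) x) (hscal (1 - alpha n) (Qop N lam S n x)).

Definition Top (N : nat) (lam : nat -> nat -> R) (S : nat -> H -> H)
  (alpha : nat -> R) (kappa : R) (n : nat) (x : H) : H :=
  let r := Rop N lam S alpha n x in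
  hadd (hscal (1/2) (hadd x r))
       (hscal (1/2 * ((kappa - alpha n) / (1 - alpha n))) (hsub x r)).
End Ops.

Fixpoint rsum (f : nat -> R) (N : nat) : R :=
  match N with O => 0 | S m => rsum f m + f m end.

(* max_{i < N} kap i  (for N >= 1 and kap i >= 0 this is the maximum) *)
Definition kmax (kap : nat -> R) (N : nat) : R :=
  fold_right Rmax 0 (map kap (seq 0 N)).

Definition summable (a : nat -> R) : Prop :=
  exists l, Un_cv (fun n => sum_f_R0 a n) l.

From Stdlib Require Import Reals Lra Lia List.
Open Scope R_scope.

(* Unfolding the definitions, T_n z = z + c (Q_n z - z) with c = (1-kappa)/2,
   whatever alpha_n is; so z - T_n z = c (z - Q_n z) and Fix T_n = Fix Q_n.
   For a common fixed point p of the S_i, the strict-pseudocontraction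
   inequality gives  (1-k_i) |z - S_i z|^2 <= 2 <z - S_i z, z - p>; averaging
   with the weights lambda_{n,j} bounds  lambda_{n,i} (1-k_i) |z - S_i z|^2
   by  2 <z - Q_n z, z - p>  (key_residual_ineq).  This yields Fix Q_n = F.
   For a bounded z_n with summable |z_n - T_n z_n|^2 the Q_n-residuals tend to
   0, hence (weights bounded below) so do the S_i-residuals; the
   demiclosedness principle for strict pseudocontractions then puts every
   weak cluster point in F. *)

Section InnerProduct.
Context {H : Hilbert}.

Lemma hadd_0r (x : H) : hadd x hzero = x.
Proof. rewrite hadd_comm; apply hadd_0l. Qed.

Lemma ip_0l (y : H) : hinner hzero y = 0.
Proof. assert (E := hinner_addl H hzero hzero y). rewrite hadd_0l in E. lra. Qed.

Lemma ip_oppl (x y : H) : hinner (hopp x) y = - hinner x y.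
Proof. assert (E := hinner_addl H (hopp x) x y). rewrite hadd_oppl, ip_0l in E. lra. Qed.

Lemma ip_subl (x z y : H) : hinner (hsub x z) y = hinner x y - hinner z y.
Proof. unfold hsub. rewrite hinner_addl, ip_oppl. ring. Qed.

Lemma ip_addr (x y z : H) : hinner z (hadd x y) = hinner z x + hinner z y.
Proof. rewrite !(hinner_sym _ z), hinner_addl. reflexivity. Qed.

Lemma ip_scalr a (x y : H) : hinner y (hscal a x) = a * hinner y x.
Proof. rewrite !(hinner_sym _ y), hinner_scall. reflexivity. Qed.

Lemma ip_oppr (x y : H) : hinner y (hopp x) = - hinner y x.
Proof. rewrite !(hinner_sym _ y), ip_oppl. reflexivity. Qed.

Lemma ip_subr (x z y : H) : hinner y (hsub x z) = hinner y x - hinner y z.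
Proof. rewrite !(hinner_sym _ y), ip_subl. reflexivity. Qed.

Lemma sub_norm0_eq (u v : H) : hinner (hsub u v) (hsub u v) = 0 -> u = v.
Proof.
  intro E. apply hinner_def in E. unfold hsub in E.
  transitivity (hadd (hadd u (hopp v)) v).
  - rewrite <- hadd_assoc, hadd_oppl, hadd_0r; reflexivity.
  - rewrite E, hadd_0l; reflexivity.
Qed.

(* Vectors are determined by their inner products: the workhorse for
   proving vector identities by expanding both sides. *)
Lemma inner_ext (u v : H) : (forall y, hinner u y = hinner v y) -> u = v.
Proof. intro E. apply sub_norm0_eq. rewrite ip_subl, E. ring. Qed.

Lemma hnorm_sqr (x : H) : hnorm x ^ 2 = hinner x x.
Proof. unfold hnorm; apply pow2_sqrt; apply hinner_pos. Qed.

Lemma ip_vsum (f : nat -> H) N y :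
  hinner (vsum f N) y = rsum (fun i => hinner (f i) y) N.
Proof. induction N; simpl; [apply ip_0l | rewrite hinner_addl, IHN; reflexivity]. Qed.

End InnerProduct.

Global Hint Rewrite @ip_subl @ip_subr @hinner_addl @ip_addr @hinner_scall @ip_scalr
  @ip_oppl @ip_oppr @ip_0l : inner.

Section InnerEstimates.
Context {H : Hilbert}.

Lemma inner_young (a b : H) d : 0 < d -> 2 * hinner a b <= d * hinner b b + hinner a a / d.
Proof.
  intro Hd. assert (E := hinner_pos _ (hsub a (hscal d b))).
  autorewrite with inner in E. rewrite (hinner_sym _ b a) in E.
  apply Rmult_le_reg_r with d; auto.
  replace ((d * hinner b b + hinner a a / d) * d) with (d * (d * hinner b b) + hinner a a)
    by (field; lra).
  lra.
Qed.

Lemma sub_sqr_le (u v : H) : hinner (hsub u v) (hsub u v) <= 2 * hinner u u + 2 * hinner v v.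
Proof.
  assert (E := hinner_pos _ (hadd u v)). autorewrite with inner in *.
  rewrite (hinner_sym _ v u) in *. lra.
Qed.

Lemma bounded_translate (z : nat -> H) (p : H) :
  bounded_seq z -> exists B, forall n, hinner (hsub (z n) p) (hsub (z n) p) <= B.
Proof.
  intros [M HM]. exists (2 * (M * M) + 2 * hinner p p). intro n.
  assert (Hz : hinner (z n) (z n) <= M * M).
  { rewrite <- hnorm_sqr. assert (0 <= hnorm (z n)) by apply sqrt_pos.
    specialize (HM n). simpl. nra. }
  assert (E := sub_sqr_le (z n) p). lra.
Qed.

End InnerEstimates.

Lemma rsum_ext f g N : (forall i, (i < N)%nat -> f i = g i) -> rsum f N = rsum g N.
Proof.
  induction N; intros E; simpl; auto.
  rewrite IHN, E by (intros; try apply E; lia). reflexivity.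
Qed.

Lemma rsum_le f g N : (forall i, (i < N)%nat -> f i <= g i) -> rsum f N <= rsum g N.
Proof.
  induction N; intros E; simpl; [lra|].
  assert (rsum f N <= rsum g N) by (apply IHN; intros; apply E; lia).
  assert (f N <= g N) by (apply E; lia). lra.
Qed.

Lemma rsum_minus f g N : rsum (fun j => f j - g j) N = rsum f N - rsum g N.
Proof. induction N; simpl; [ring | rewrite IHN; ring]. Qed.

Lemma rsum_scal c f N : rsum (fun j => c * f j) N = c * rsum f N.
Proof. induction N; simpl; [ring | rewrite IHN; ring]. Qed.

Lemma rsum_term f N i : (forall j, (j < N)%nat -> 0 <= f j) -> (i < N)%nat -> f i <= rsum f N.
Proof.
  induction N; intros Hp Hi; [lia|]. simpl.
  assert (Hs : 0 <= rsum f N).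
  { replace 0 with (rsum (fun _ => 0) N) by (clear; induction N; simpl; lra).
    apply rsum_le. intros; apply Hp; lia. }
  destruct (Nat.eq_dec i N) as [->|Hne]; [lra|].
  assert (f i <= rsum f N) by (apply IHN; [intros; apply Hp; lia | lia]).
  assert (0 <= f N) by (apply Hp; lia). lra.
Qed.

(* Real sequences whose limit superior is nonpositive; for nonnegative
   sequences this is convergence to 0.  All asymptotic statements of the
   proof are phrased with this notion. *)

Definition limsup_nonpos (t : nat -> R) : Prop :=
  forall eps, 0 < eps -> exists K, forall n, (K <= n)%nat -> t n <= eps.

Lemma limsup_nonpos_le g h : (forall n, g n <= h n) -> limsup_nonpos h -> limsup_nonpos g.
Proof.
  intros E Ht eps He. destruct (Ht eps He) as [K HK].
  exists K; intros n Hn. eapply Rle_trans; [apply E | apply HK; auto].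
Qed.

Lemma limsup_nonpos_plus g h :
  limsup_nonpos g -> limsup_nonpos h -> limsup_nonpos (fun n => g n + h n).
Proof.
  intros Hg Hh eps He.
  destruct (Hg (eps/2)) as [K1 H1]; [lra|]. destruct (Hh (eps/2)) as [K2 H2]; [lra|].
  exists (K1 + K2)%nat; intros n Hn.
  specialize (H1 n ltac:(lia)). specialize (H2 n ltac:(lia)). lra.
Qed.

Lemma limsup_nonpos_scale c g : 0 <= c -> limsup_nonpos g -> limsup_nonpos (fun n => c * g n).
Proof.
  intros Hc Hg eps He. destruct (Req_dec c 0) as [->|Hc0].
  - exists 0%nat; intros; lra.
  - destruct (Hg (eps / c)) as [K HK]; [apply Rdiv_lt_0_compat; lra|].
    exists K; intros n Hn. specialize (HK n Hn).
    replace eps with (c * (eps / c)) by (field; auto).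
    apply Rmult_le_compat_l; auto.
Qed.

Lemma limsup_nonpos_unscale c g : 0 < c -> limsup_nonpos (fun n => c * g n) -> limsup_nonpos g.
Proof.
  intros Hc Hg. apply limsup_nonpos_le with (fun n => / c * (c * g n)).
  - intro n. right. field. lra.
  - apply limsup_nonpos_scale; auto. left; apply Rinv_0_lt_compat; auto.
Qed.

Lemma limsup_nonpos_subseq g (phi : nat -> nat) :
  (forall k, (phi k < phi (S k))%nat) -> limsup_nonpos g -> limsup_nonpos (fun k => g (phi k)).
Proof.
  intros Hphi Hg eps He. destruct (Hg eps He) as [K HK]. exists K; intros n Hn.
  apply HK. enough (n <= phi n)%nat by lia.
  clear Hn. induction n; [lia|]. specialize (Hphi n). lia.
Qed.

Lemma limsup_nonpos_const C : limsup_nonpos (fun _ => C) -> C <= 0.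
Proof.
  intro HC. destruct (Rle_or_lt C 0) as [|Hpos]; auto.
  destruct (HC (C/2)) as [K HK]; [lra|]. specialize (HK K (le_n K)). lra.
Qed.

Lemma summable_limsup_nonpos a : summable a -> limsup_nonpos a.
Proof.
  intros [l Hl] e He. destruct (Hl (e/2)) as [K HK]; [lra|].
  exists (S K). intros n Hn. destruct n as [|m]; [lia|].
  assert (A1 := HK m ltac:(lia)). assert (A2 := HK (S m) ltac:(lia)).
  unfold R_dist in *. simpl in A2.
  apply Rabs_def2 in A1. apply Rabs_def2 in A2. lra.
Qed.

Lemma cv_limsup_nonpos s l : Un_cv s l -> limsup_nonpos (fun n => l - s n).
Proof.
  intros Hs eps He. destruct (Hs eps He) as [K HK]. exists K; intros n Hn.
  specialize (HK n ltac:(lia)). unfold R_dist in HK. apply Rabs_def2 in HK. lra.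
Qed.

(* Absorption: if u_n <= d B + t_n / d for every d > 0 and t_n -> 0, then
   u_n -> 0 (choose d small, then n large). *)
Lemma limsup_nonpos_absorb (t u : nat -> R) B : 0 <= B -> limsup_nonpos t ->
  (forall n d, 0 < d -> u n <= d * B + t n / d) -> limsup_nonpos u.
Proof.
  intros HB Ht Hu eps He. set (d := eps / (2 * (B + 1))).
  assert (Hd : 0 < d) by (unfold d; apply Rdiv_lt_0_compat; lra).
  destruct (Ht (d * eps / 2)) as [K HK].
  { apply Rdiv_lt_0_compat; [apply Rmult_lt_0_compat|]; lra. }
  exists K; intros n Hn. specialize (Hu n d Hd). specialize (HK n Hn).
  assert (d * (B + 1) = eps / 2) by (unfold d; field; lra).
  assert (t n / d <= eps / 2).
  { unfold Rdiv. apply Rle_trans with (d * eps / 2 * / d).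
    - apply Rmult_le_compat_r; [left; apply Rinv_0_lt_compat; auto | auto].
    - right; field; lra. }
  lra.
Qed.

Lemma limsup_nonpos_inner {H : Hilbert} (a b : nat -> H) B :
  limsup_nonpos (fun n => hinner (a n) (a n)) -> (forall n, hinner (b n) (b n) <= B) ->
  limsup_nonpos (fun n => 2 * hinner (a n) (b n)).
Proof.
  intros Ha Hb. apply limsup_nonpos_absorb with (fun n => hinner (a n) (a n)) B; auto.
  - specialize (Hb 0%nat). assert (E := hinner_pos _ (b 0%nat)). lra.
  - intros n d Hd. eapply Rle_trans; [apply inner_young, Hd|].
    specialize (Hb n). assert (d * hinner (b n) (b n) <= d * B) by (apply Rmult_le_compat_l; lra).
    lra.
Qed.

Section StrictPseudo.
Context {H : Hilbert}.
Variables (k : R) (T : H -> H).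
Hypothesis HT : strict_pseudo k T.

Lemma spc_fixed_point_ineq p z : T p = p ->
  (1 - k) * hinner (hsub z (T z)) (hsub z (T z)) <= 2 * hinner (hsub z (T z)) (hsub z p).
Proof.
  intro Hp. assert (Hs := HT z p). rewrite !hnorm_sqr, Hp in Hs.
  assert (E1 : hsub (T z) p = hsub (hsub z p) (hsub z (T z)))
    by (apply inner_ext; intro y; autorewrite with inner; ring).
  assert (E2 : hsub (hsub z (T z)) (hsub p p) = hsub z (T z))
    by (apply inner_ext; intro y; autorewrite with inner; ring).
  rewrite E1, E2 in Hs. revert Hs.
  generalize (hsub z (T z)) as a. generalize (hsub z p) as b. intros b a Hs.
  autorewrite with inner in Hs. rewrite (hinner_sym _ b a) in Hs. lra.
Qed.

Lemma spc_demi_ineq u x : k < 1 ->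
  (1 - k) * hinner (hsub x (T x)) (hsub x (T x)) <=
  2 * (1 - k) * hinner (hsub u (T u)) (hsub x (T x)) + 2 * hinner (hsub u (T u)) (hsub u x)
  - 2 * hinner (hsub u x) (hsub x (T x)).
Proof.
  intro Hk. assert (Hs := HT u x). rewrite !hnorm_sqr in Hs.
  assert (E : hsub (T u) (T x) = hadd (hadd (hopp (hsub u (T u))) (hsub u x)) (hsub x (T x)))
    by (apply inner_ext; intro y; autorewrite with inner; ring).
  rewrite E in Hs. revert Hs.
  generalize (hsub u (T u)) as a. generalize (hsub u x) as w. generalize (hsub x (T x)) as d.
  intros d w a Hs. autorewrite with inner in Hs.
  rewrite ?(hinner_sym _ d a), ?(hinner_sym _ w a), ?(hinner_sym _ d w) in Hs.
  assert (0 <= (1 - k) * hinner a a) by (apply Rmult_le_pos; [lra | apply hinner_pos]).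
  lra.
Qed.

Lemma spc_demiclosed (u : nat -> H) x B : 0 <= k < 1 ->
  (forall n, hinner (hsub (u n) x) (hsub (u n) x) <= B) ->
  (forall y, Un_cv (fun n => hinner (u n) y) (hinner x y)) ->
  limsup_nonpos (fun n => hinner (hsub (u n) (T (u n))) (hsub (u n) (T (u n)))) ->
  T x = x.
Proof.
  intros Hk Hb Hw Hres. set (d := hsub x (T x)).
  assert (Hdd : 0 <= hinner d d) by apply hinner_pos.
  assert (Hle : (1 - k) * hinner d d <= 0).
  { apply limsup_nonpos_const.
    apply limsup_nonpos_le with (fun n =>
      (1 - k) * (2 * hinner (hsub (u n) (T (u n))) d)
      + (2 * hinner (hsub (u n) (T (u n))) (hsub (u n) x)
      + 2 * (hinner x d - hinner (u n) d))).
    - intro n. assert (E := spc_demi_ineq (u n) x ltac:(lra)). fold d in E.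
      rewrite (ip_subl (u n) x d) in E. lra.
    - apply limsup_nonpos_plus; [apply limsup_nonpos_scale; [lra|] | apply limsup_nonpos_plus].
      + apply limsup_nonpos_inner with (hinner d d); auto. intros; lra.
      + apply limsup_nonpos_inner with B; auto.
      + apply limsup_nonpos_scale; [lra|]. apply cv_limsup_nonpos, Hw. }
  symmetry. apply sub_norm0_eq. fold d. nra.
Qed.

End StrictPseudo.

Section Averaged.
Context {H : Hilbert}.
Variables (N : nat) (lam : nat -> nat -> R) (S : nat -> H -> H) (kap : nat -> R).
Hypothesis Hkap : forall i, (i < N)%nat -> 0 <= kap i < 1.
Hypothesis HS : forall i, (i < N)%nat -> strict_pseudo (kap i) (S i).
Hypothesis Hlam : forall n i, (i < N)%nat -> 0 < lam n i.
Hypothesis Hsum : forall n, rsum (lam n) N = 1.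

Lemma ip_Qop n z w :
  hinner (Qop N lam S n z) w = rsum (fun i => lam n i * hinner (S i z) w) N.
Proof. unfold Qop. rewrite ip_vsum. apply rsum_ext. intros; apply hinner_scall. Qed.

Lemma Top_residual alpha kappa n z : alpha n <> 1 ->
  hsub z (Top N lam S alpha kappa n z) = hscal ((1 - kappa) / 2) (hsub z (Qop N lam S n z)).
Proof.
  intro Ha. apply inner_ext; intro y. unfold Top, Rop. cbv zeta.
  autorewrite with inner. field. lra.
Qed.

Lemma Top_fixed_iff alpha kappa n x : kappa < 1 -> alpha n <> 1 ->
  Top N lam S alpha kappa n x = x <-> Qop N lam S n x = x.
Proof.
  intros Hk Ha. set (c := (1 - kappa) / 2).
  assert (Res := Top_residual alpha kappa n x Ha). fold c in Res.
  split; intro E.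
  - assert (E0 : hinner (hsub x (Top N lam S alpha kappa n x))
                        (hsub x (Top N lam S alpha kappa n x)) = 0)
      by (rewrite E; autorewrite with inner; ring).
    rewrite Res in E0. autorewrite with inner in E0.
    assert (Hc : c * c > 0) by (unfold c; nra).
    symmetry. apply sub_norm0_eq. autorewrite with inner. nra.
  - symmetry. apply sub_norm0_eq. rewrite Res, E. autorewrite with inner. ring.
Qed.

Lemma Qop_common_fixed n x :
  (forall i, (i < N)%nat -> S i x = x) -> Qop N lam S n x = x.
Proof.
  intro Hx. apply inner_ext; intro y. rewrite ip_Qop.
  rewrite (rsum_ext _ (fun j => hinner x y * lam n j)) by (intros; rewrite Hx; auto; ring).
  rewrite rsum_scal, Hsum. ring.
Qed.

Lemma key_residual_ineq p z n i :
  (forall j, (j < N)%nat -> S j p = p) -> (i < N)%nat ->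
  lam n i * ((1 - kap i) * hinner (hsub z (S i z)) (hsub z (S i z)))
  <= 2 * hinner (hsub z (Qop N lam S n z)) (hsub z p).
Proof.
  intros Hp Hi.
  set (r := fun j => hinner (hsub z (S j z)) (hsub z (S j z))).
  assert (Havg : 2 * hinner (hsub z (Qop N lam S n z)) (hsub z p)
                 = rsum (fun j => lam n j * (2 * hinner (hsub z (S j z)) (hsub z p))) N).
  { rewrite ip_subl, ip_Qop.
    rewrite (rsum_ext (fun j => lam n j * (2 * hinner (hsub z (S j z)) (hsub z p)))
                      (fun j => 2 * hinner z (hsub z p) * lam n j
                                  - 2 * (lam n j * hinner (S j z) (hsub z p))))
      by (intros; rewrite ip_subl; ring).
    rewrite rsum_minus, !rsum_scal, Hsum. ring. }
  rewrite Havg.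
  apply Rle_trans with (rsum (fun j => lam n j * ((1 - kap j) * r j)) N).
  - apply (rsum_term (fun j => lam n j * ((1 - kap j) * r j))); auto.
    intros j Hj. specialize (Hlam n j Hj). specialize (Hkap j Hj).
    apply Rmult_le_pos; [lra|]. apply Rmult_le_pos; [lra | apply hinner_pos].
  - apply rsum_le. intros j Hj. apply Rmult_le_compat_l; [specialize (Hlam n j Hj); lra|].
    apply spc_fixed_point_ineq; auto.
Qed.

Lemma Qop_fixed_common p n x :
  (forall j, (j < N)%nat -> S j p = p) -> Qop N lam S n x = x ->
  forall i, (i < N)%nat -> S i x = x.
Proof.
  intros Hp Hx i Hi. assert (Hq := key_residual_ineq p x n i Hp Hi).
  rewrite Hx in Hq.
  replace (hinner (hsub x x) (hsub x p)) with 0 in Hq by (rewrite ip_subl; ring).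
  assert (0 < lam n i * (1 - kap i))
    by (apply Rmult_lt_0_compat; [apply Hlam | specialize (Hkap i Hi); lra]; auto).
  assert (Hpos := hinner_pos _ (hsub x (S i x))).
  symmetry. apply sub_norm0_eq. nra.
Qed.

Lemma residual_S_vanishes p (z : nat -> H) i eps :
  (forall j, (j < N)%nat -> S j p = p) -> (i < N)%nat -> bounded_seq z ->
  0 < eps -> (forall n, eps <= lam n i) ->
  limsup_nonpos (fun n => hinner (hsub (z n) (Qop N lam S n (z n)))
                                 (hsub (z n) (Qop N lam S n (z n)))) ->
  limsup_nonpos (fun n => hinner (hsub (z n) (S i (z n))) (hsub (z n) (S i (z n)))).
Proof.
  intros Hp Hi Hz He Hlow HQ. assert (Hki := Hkap i Hi).
  destruct (bounded_translate z p Hz) as [B HB].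
  apply limsup_nonpos_unscale with (eps * (1 - kap i)); [apply Rmult_lt_0_compat; lra|].
  apply limsup_nonpos_le with
    (fun n => 2 * hinner (hsub (z n) (Qop N lam S n (z n))) (hsub (z n) p)).
  - intro n. eapply Rle_trans; [|apply (key_residual_ineq p (z n) n i Hp Hi)].
    rewrite Rmult_assoc. apply Rmult_le_compat_r; auto.
    apply Rmult_le_pos; [lra | apply hinner_pos].
  - apply limsup_nonpos_inner with B; auto.
Qed.

End Averaged.

Theorem mainTheorem4 (H : Hilbert) (N : nat) (S : nat -> H -> H)
  (kap : nat -> R) (lam : nat -> nat -> R) (alpha : nat -> R) :
  (1 <= N)%nat ->
  (forall i, (i < N)%nat -> 0 <= kap i < 1) ->
  (forall i, (i < N)%nat -> strict_pseudo (kap i) (S i)) ->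
  (exists p : H, forall i, (i < N)%nat -> S i p = p) ->
  (forall n i, (i < N)%nat -> 0 < lam n i) ->
  (forall n, rsum (lam n) N = 1) ->
  (forall i, (i < N)%nat -> exists eps, 0 < eps /\ forall n, eps <= lam n i) ->
  (forall n, kmax kap N < alpha n < 1) ->
  let T := Top N lam S alpha (kmax kap N) in
  (forall x : H, (forall n, T n x = x) <-> (forall i, (i < N)%nat -> S i x = x)) /\
  (forall z : nat -> H,
     bounded_seq z ->
     summable (fun n => (hnorm (hsub (z (Datatypes.S n)) (z n)))^2) ->
     summable (fun n => (hnorm (hsub (z n) (T n (z n))))^2) ->
     forall x : H, weak_cluster z x -> forall n, T n x = x).
Proof.
  intros _ Hkap HS [p Hp] Hlam Hsum Heps Halpha T. unfold T; clear T.
  set (k := kmax kap N) in *.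
  assert (Hk : k < 1) by (destruct (Halpha 0%nat); lra).
  assert (Ha : forall n, alpha n <> 1) by (intros n E; destruct (Halpha n); lra).
  assert (Hfix : forall x : H, (forall n, Top N lam S alpha k n x = x)
                               <-> (forall i, (i < N)%nat -> S i x = x)).
  { intro x; split.
    - intro Hx. apply (Qop_fixed_common N lam S kap Hkap HS Hlam Hsum p 0); auto.
      apply (Top_fixed_iff N lam S alpha k 0 x Hk (Ha 0%nat)); auto.
    - intros Hx n. apply Top_fixed_iff; auto. apply Qop_common_fixed; auto. }
  split; [exact Hfix|].
  intros z Hz _ HT x [phi [Hphi Hw]]. apply Hfix. intros i Hi.
  (* |z_n - T_n z_n| -> 0, hence |z_n - Q_n z_n| -> 0 *)
  assert (HQ : limsup_nonpos (fun n => hinner (hsub (z n) (Qop N lam S n (z n)))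
                                              (hsub (z n) (Qop N lam S n (z n))))).
  { apply limsup_nonpos_unscale with (((1 - k) / 2) * ((1 - k) / 2)); [nra|].
    apply limsup_nonpos_le with (fun n => hnorm (hsub (z n) (Top N lam S alpha k n (z n))) ^ 2).
    - intro n. rewrite hnorm_sqr, Top_residual by auto. autorewrite with inner. lra.
    - apply summable_limsup_nonpos; auto. }
  destruct (Heps i Hi) as [eps [He Hlow]].
  assert (HSi := residual_S_vanishes N lam S kap Hkap HS Hlam Hsum p z i eps Hp Hi Hz He Hlow HQ).
  destruct (bounded_translate z x Hz) as [B HB].
  apply (spc_demiclosed (kap i) (S i) (HS i Hi) (fun m => z (phi m)) x B); auto.
  apply (limsup_nonpos_subseq _ phi Hphi HSi).
Qed.
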